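(* Let $m\ge1$ be an integer and let $\alpha(m,3)$ denote the independence number of ${\rm SR}(m,3)$. Then $\alpha(m,3)=\frac16(m+1)(m+2)$ if $m\equiv\pm1\pmod 6$; $\alpha(m,3)=\frac16 m(m+3)$ if $m\equiv 3\pmod 6$; $\alpha(m,3)=\frac16 m(m+2)$ if $m\equiv 0,4\pmod 6$; $\alpha(m,3)=\frac16(m^2+2m-2)$ if $m\equiv 2\pmod 6$.
   Context: ${\rm SR}(m,n)$ is the graph whose vertices are the vectors in $\{0,1,2,\dots\}^m$ with coordinate sum $n$, two vertices being adjacent when they differ in precisely two coordinate positions. The independence number is the largest size of a set of pairwise nonadjacent vertices. *)

From mathcomp Require Import all_boot all_order.
Set Implicit Arguments. Unset Strict Implicit. Unset Printing Implicit Defensive.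

(* Vertices of SR(m,n): vectors in {0,1,2,...}^m with coordinate sum n.
   Each coordinate is at most n, so we use 'I_n.+1 as coordinate type;
   this loses no vectors. *)
Definition SRvert (m n : nat) : {set {ffun 'I_m -> 'I_n.+1}} :=
  [set x : {ffun 'I_m -> 'I_n.+1} | (\sum_(i < m) (x i : nat)) == n].

Definition SRadj (m n : nat) (x y : {ffun 'I_m -> 'I_n.+1}) : bool :=
  #|[set i | x i != y i]| == 2.

Definition SRindependent (m n : nat) (S : {set {ffun 'I_m -> 'I_n.+1}}) : bool :=
  (S \subset SRvert m n) &&
  [forall x in S, forall y in S, ~~ SRadj x y].

Definition SRalpha (m n : nat) : nat :=
  \max_(S : {set {ffun 'I_m -> 'I_n.+1}} | SRindependent S) #|S|.

From mathcomp Require Import all_boot zify.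
Set Implicit Arguments. Unset Strict Implicit. Unset Printing Implicit Defensive.

(* Upper bound: two vertices of an independent set S of SR(m,3) never contain a common
   sub-multiset of size 2, so every coordinate pair {i, j}, i = j allowed, is covered by at
   most one vertex of S.  Weighing the mass sum_(x in S) x_i of a coordinate against the
   pairs {i, j} it covers gives 2 sum_(x in S) x_i <= m + 3 + 2 [3 e_i \in S], and summing
   over i yields 6 |S| <= m (m + 3) + 2, or m (m + 2) + 2 for even m by parity.
   Lower bound: for n = m (m odd) or n = m + 1 (m even), the vertices x with
   sum_k k x_k = s (mod n) are independent, since two of them differing exactly in positions
   a, b would give (a - b) d = 0 (mod n) with d in {1, 2, 3}; the residue s = 1 disposes of
   d = 3 when 3 divides n.  Their number is read off from the numbers of solutions mod n of
   i + j + c = s, 2 i + j = s and 3 i = s. *)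

Lemma sum_mul_pred1 (T : finType) (a : T) (f : T -> nat) :
  \sum_x f x * (x == a) = f a.
Proof.
rewrite (bigD1 a) //= eqxx muln1 big1 ?addn0 // => x /negbTE ->.
by rewrite muln0.
Qed.

Lemma sum_pred1 (T : finType) (a : T) : \sum_x ((x == a) : nat) = 1.
Proof. by rewrite -(sum_mul_pred1 a (fun _ => 1)); apply: eq_bigr => x _; rewrite mul1n. Qed.

Lemma leq_sum_term (T : finType) (f : T -> nat) a : f a <= \sum_x f x.
Proof. by rewrite (bigD1 a) //= leq_addr. Qed.

Lemma sum_ge2 (T : finType) (f : T -> nat) a b :
  a != b -> 0 < f a -> 0 < f b -> 2 <= \sum_x f x.
Proof.
move=> ab fa fb; rewrite (bigD1 a) //= (bigD1 b) /= 1?eq_sym //.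
by rewrite addnA (leq_trans _ (leq_addr _ _)) // (leq_add fa fb).
Qed.

Lemma sum_eq_term0 (T : finType) (f : T -> nat) a :
  f a = \sum_x f x -> forall x, x != a -> f x = 0.
Proof.
rewrite (bigD1 a) //= -[LHS]addn0 => /eqP; rewrite eqn_add2l eq_sym sum_nat_eq0.
by move=> /forallP H x xa; apply/eqP; move: (H x); rewrite xa.
Qed.

Lemma sum_eq1_supp (T : finType) (f : T -> nat) :
  \sum_x f x = 1 -> exists a, forall x, x != a -> f x = 0.
Proof.
by move/eqP/sum_nat_eq1 => [a [_ _ Hf]]; exists a => x xa; apply: Hf.
Qed.

Lemma eq_sum_leq (T : finType) (f g : T -> nat) :
  (forall x, g x <= f x) -> \sum_x f x = \sum_x g x -> f =1 g.
Proof.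
move=> gf E x; apply/eqP; rewrite eqn_leq gf andbT -subn_eq0.
have /eqP : \sum_x (f x - g x) = 0 by rewrite sumnB // E subnn.
by rewrite sum_nat_eq0 => /forallP/(_ x).
Qed.

Lemma sum_nat_le1 (T : finType) (A : {set T}) (Q : pred T) :
  {in A &, forall x y, Q x -> Q y -> x = y} -> \sum_(x in A) (Q x : nat) <= 1.
Proof.
move=> H; case: (pickP (fun x => (x \in A) && Q x)) => [x0 /= /andP[x0A Qx0]|Hn].
  rewrite -(sum_pred1 x0) big_mkcond /=; apply: leq_sum => x _.
  case xA: (x \in A) => //; case Qx: (Q x) => //.
  by rewrite (H x x0) // eqxx.
by rewrite big1 // => x xA; move: (Hn x); rewrite xA /= => ->.
Qed.

Section Adjacency.
Variables m n : nat.
Local Notation V := {ffun 'I_m -> 'I_n.+1}.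

Lemma SRvert_sum (x : V) : x \in SRvert m n -> \sum_k (x k : nat) = n.
Proof. by rewrite inE => /eqP. Qed.

Lemma SRvert_full (x : V) a : x \in SRvert m n -> (x a : nat) = n ->
  forall k, k != a -> (x k : nat) = 0.
Proof.
move=> /SRvert_sum xn xa; apply: (sum_eq_term0 (f := fun k => (x k : nat))).
by rewrite xa xn.
Qed.

(* Two distinct vertices cannot differ in a single position, since both coordinate sums are n. *)
Lemma SRadj_agree_off2 (x y : V) a b : x \in SRvert m n -> y \in SRvert m n ->
  x != y -> (forall k, k != a -> k != b -> x k = y k) -> SRadj x y.
Proof.
move=> /SRvert_sum xn /SRvert_sum yn xy agree; rewrite /SRadj.
set D := [set i | x i != y i].
have D_sub : D \subset [set a; b].
  apply/subsetP => k; rewrite !inE; apply: contraR.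
  by rewrite negb_or => /andP[ka kb]; rewrite agree.
have D_le2 : #|D| <= 2.
  by rewrite (leq_trans (subset_leq_card D_sub)) // cards2; case: (a != b).
have D_gt0 : 0 < #|D|.
  rewrite card_gt0; apply: contraNneq xy => D0; apply/eqP/ffunP => k.
  by apply/eqP; apply: contraT => xyk; rewrite -(in_set0 k) -D0 inE.
have D_neq1 : #|D| != 1.
  apply/negP => /cards1P [k0 Dk0].
  have agree_k0 : forall k, k != k0 -> (x k : nat) = y k.
    move=> k kk0; apply/eqP; apply: contraT => xyk.
    have : k \in D by rewrite inE; apply: contraNneq xyk => ->.
    by rewrite Dk0 inE (negbTE kk0).
  have xy_k0 : (x k0 : nat) = y k0.
    have := etrans xn (esym yn); rewrite (bigD1 k0) //= [in RHS](bigD1 k0) //=.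
    by rewrite (eq_bigr _ agree_k0) => /eqP; rewrite eqn_add2r => /eqP.
  have : k0 \in D by rewrite Dk0 inE.
  by rewrite inE -(inj_eq val_inj) /= xy_k0 eqxx.
by apply/eqP; move: D_le2 D_gt0 D_neq1; clear; lia.
Qed.

Lemma SRvert_agree_off1 (x : V) (z : 'I_m -> nat) : x \in SRvert m n ->
  (forall k, z k <= x k) -> (\sum_k z k).+1 = n ->
  exists a, forall k, k != a -> (x k : nat) = z k.
Proof.
move=> /SRvert_sum xn zx zn.
have [a Ha] : exists a, forall k, k != a -> (x k : nat) - z k = 0.
  by apply: sum_eq1_supp; rewrite sumnB // xn -zn subSnn.
by exists a => k /Ha; move: (zx k); clear; lia.
Qed.

Variable S : {set V}.
Hypothesis S_indep : SRindependent S.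

Lemma indep_vert x : x \in S -> x \in SRvert m n.
Proof. by case/andP: S_indep => /subsetP/(_ x). Qed.

Lemma indep_agree_off2_eq (x y : V) a b : x \in S -> y \in S ->
  (forall k, k != a -> k != b -> (x k : nat) = y k) -> x = y.
Proof.
move=> xS yS agree; apply/eqP; apply: contraT => xy.
have adj : SRadj x y.
  apply: (SRadj_agree_off2 (a := a) (b := b)) (indep_vert xS) (indep_vert yS) xy _.
  by move=> k ka kb; apply/val_inj/agree.
by case/andP: S_indep => _ /forall_inP/(_ x xS)/forall_inP/(_ y yS); rewrite adj.
Qed.

Lemma indep_agree_off1_eq (x y : V) (z : 'I_m -> nat) a b : x \in S -> y \in S ->
  (forall k, k != a -> (x k : nat) = z k) -> (forall k, k != b -> (y k : nat) = z k) ->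
  x = y.
Proof.
move=> xS yS xz yz; apply: (indep_agree_off2_eq (a := a) (b := b)) => // k ka kb.
by rewrite xz // yz.
Qed.

Lemma indep_dominate_eq (x y : V) (z : 'I_m -> nat) : x \in S -> y \in S ->
  (forall k, z k <= x k) -> (forall k, z k <= y k) -> (\sum_k z k).+1 = n -> x = y.
Proof.
move=> xS yS zx zy zn.
have [a xz] := SRvert_agree_off1 (indep_vert xS) zx zn.
have [b yz] := SRvert_agree_off1 (indep_vert yS) zy zn.
exact: indep_agree_off1_eq xS yS xz yz.
Qed.

End Adjacency.

Section UpperBound.
Variable m : nat.
Local Notation V := {ffun 'I_m -> 'I_4}.
Variable S : {set V}.
Hypothesis S_indep : SRindependent S.

Definition coord_sum i := \sum_(x in S) (x i : nat).
Definition full_count i := \sum_(x in S) ((x i : nat) == 3 : nat).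
Definition partners i (x : V) := \sum_j ([&& j != i, 0 < x j & 0 < x i] : nat).
Definition near_unit i (x : V) :=
  ((x i : nat) == 1) && (partners i x <= 1) || ((x i : nat) == 3).

Lemma exists_partner (x : V) i : x \in SRvert m 3 -> x i < 3 ->
  exists j, (j != i) && (0 < x j).
Proof.
move=> /SRvert_sum x3 xi; case: (pickP (fun j => (j != i) && (0 < x j))) => [j|none].
  by exists j.
move: x3; rewrite (bigD1 i) //= big1 ?addn0 => [x3|j ji]; first by rewrite x3 in xi.
by move: (none j); rewrite ji /=; case: (x j : nat).
Qed.

Lemma partners_gt0 (x : V) i : x \in SRvert m 3 -> 0 < x i < 3 -> 0 < partners i x.
Proof.
move=> xv /andP[xi0 xi3]; have [j /andP[ji xj]] := exists_partner xv xi3.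
by apply: leq_trans (leq_sum_term _ j); rewrite ji xj xi0.
Qed.

(* The summands other than partners i x are the ones that S can realise at most once:
   the pair {i, i} (when 1 < x i) and the vertices e_i + 2 e_j or 3 e_i (near_unit). *)
Lemma coord_vertex_bound (x : V) i : x \in SRvert m 3 ->
  2 * x i <= partners i x + near_unit i x + (1 < x i) * 3 + ((x i : nat) == 3) * 2.
Proof.
move=> xv; have := partners_gt0 xv (i := i); have := ltn_ord (x i); rewrite /near_unit.
case: (x i : nat) => [|[|[|[|?]]]] //= _ p_gt0; try have := p_gt0 isT;
  case: (partners i x) => [|[|?]] //=; lia.
Qed.

Lemma share_pair_eq (x y : V) i j : i != j -> x \in S -> y \in S ->
  0 < x i -> 0 < x j -> 0 < y i -> 0 < y j -> x = y.
Proof.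
move=> ij xS yS xi xj yi yj.
pose z k := ((k == i) : nat) + (k == j).
have z_le (w : V) : 0 < w i -> 0 < w j -> forall k, z k <= w k.
  move=> wi wj k; rewrite /z; case: (eqVneq k i) => [->|_].
    by rewrite (negbTE ij).
  by case: (eqVneq k j) => [->|].
by apply: (indep_dominate_eq S_indep xS yS (z_le _ xi xj) (z_le _ yi yj));
  rewrite big_split /= !sum_pred1.
Qed.

Lemma share_double_eq (x y : V) i : x \in S -> y \in S -> 1 < x i -> 1 < y i -> x = y.
Proof.
move=> xS yS xi yi; pose z k := 2 * (k == i).
have z_le (w : V) : 1 < w i -> forall k, z k <= w k.
  by move=> wi k; rewrite /z; case: (eqVneq k i) => [->|].
by apply: (indep_dominate_eq S_indep xS yS (z_le _ xi) (z_le _ yi));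
  rewrite -big_distrr /= sum_pred1.
Qed.

Lemma near_unit_agree_off1 (x : V) i : x \in SRvert m 3 -> near_unit i x ->
  exists a, forall k, k != a -> (x k : nat) = (k == i).
Proof.
move=> xv /orP[/andP[/eqP xi1 p_le1]|/eqP xi3].
  have [j /andP[ji xj]] : exists j, (j != i) && (0 < x j).
    by apply: exists_partner; rewrite // xi1.
  exists j => k kj; case: (eqVneq k i) => [->|ki] //=.
  apply/eqP; rewrite -leqn0 leqNgt; apply/negP => xk.
  have : 2 <= partners i x.
    apply: (@sum_ge2 _ (fun l => [&& l != i, 0 < x l & 0 < x i] : nat) j k).
    - by rewrite eq_sym.
    - by rewrite ji xj xi1.
    - by rewrite ki xk xi1.
  by rewrite leqNgt ltnS p_le1.
by exists i => k ki; rewrite (negbTE ki) (SRvert_full xv xi3).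
Qed.

Lemma sum_partners i : \sum_(x in S) partners i x <= m.-1.
Proof.
rewrite /partners exchange_big /=.
apply: (@leq_trans (\sum_j ((j != i) : nat))).
  apply: leq_sum => j _; case: (eqVneq j i) => [->|ji].
    by rewrite big1 // => x _; rewrite eqxx.
  apply: sum_nat_le1 => x y xS yS /and3P[_ xj xi] /and3P[_ yj yi].
  by apply: (share_pair_eq (i := i) (j := j)) => //; rewrite eq_sym.
have : \sum_j ((j != i) : nat) + 1 = m.
  rewrite -(sum_pred1 i) -big_split /= -[RHS]card_ord -sum1_card.
  by apply: eq_bigr => j _; case: (j == i).
lia.
Qed.

Lemma coord_sum_bound i : 2 * coord_sum i <= m + 3 + 2 * full_count i.
Proof.
have m_gt0 : 0 < m := leq_ltn_trans (leq0n i) (ltn_ord i).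
rewrite /coord_sum big_distrr /=.
apply: (@leq_trans (\sum_(x in S) (partners i x + near_unit i x + (1 < x i) * 3
                                   + ((x i : nat) == 3) * 2))).
  by apply: leq_sum => x xS; apply: coord_vertex_bound (indep_vert S_indep xS).
rewrite !big_split -!big_distrl /= -/(full_count i).
have near_le1 : \sum_(x in S) (near_unit i x : nat) <= 1.
  apply: sum_nat_le1 => x y xS yS xu yu.
  have [a xa] := near_unit_agree_off1 (indep_vert S_indep xS) xu.
  have [b yb] := near_unit_agree_off1 (indep_vert S_indep yS) yu.
  exact: (indep_agree_off1_eq (z := fun k => (k == i) : nat) S_indep xS yS xa yb).
have double_le1 : \sum_(x in S) ((1 < x i) : nat) <= 1.
  by apply: sum_nat_le1 => x y xS yS; apply: share_double_eq.
have := sum_partners i.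
set P := \sum_(x in S) _; set U := \sum_(x in S) (near_unit i x : nat).
set D := \sum_(x in S) ((1 < x i) : nat); lia.
Qed.

Lemma sum_full_count : \sum_i full_count i <= 1.
Proof.
rewrite /full_count exchange_big /=.
apply: (@leq_trans (\sum_(x in S) ([exists i, (x i : nat) == 3] : nat))).
  apply: leq_sum => x xS; case: (pickP (fun i => (x i : nat) == 3)) => [i0 /= /eqP x3|none].
    rewrite (bigD1 i0) //= big1 => [|k ki0].
      by rewrite x3 addn0; case: existsP => // -[]; exists i0; rewrite x3.
    by rewrite (SRvert_full (indep_vert S_indep xS) x3).
  by rewrite big1 // => k _; rewrite none.
apply: sum_nat_le1 => x y xS yS /existsP[i /eqP xi] /existsP[j /eqP yj].
apply: (indep_agree_off1_eq (z := fun _ => 0) S_indep xS yS).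
  exact: SRvert_full (indep_vert S_indep xS) xi.
exact: SRvert_full (indep_vert S_indep yS) yj.
Qed.

Lemma sum_coord_sum : \sum_i coord_sum i = 3 * #|S|.
Proof.
rewrite /coord_sum exchange_big /= -sum1_card big_distrr /=.
by apply: eq_bigr => x xS; rewrite muln1 (SRvert_sum (indep_vert S_indep xS)).
Qed.

Lemma indep_card_bound : 6 * #|S| <= m * (m + 2 + odd m) + 2.
Proof.
have coord_le i : 2 * coord_sum i <= m + 2 + odd m + 2 * full_count i.
  by have := coord_sum_bound i; have := odd_double_half m; lia.
have : \sum_i 2 * coord_sum i <= \sum_i (m + 2 + odd m + 2 * full_count i).
  by apply: leq_sum => i _; apply: coord_le.
rewrite -big_distrr big_split -big_distrr /= sum_coord_sum sum_nat_const card_ord.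
rewrite mulnA => /leq_trans; apply.
by rewrite leq_add2l -[X in _ <= X](muln1 2) leq_pmul2l // sum_full_count.
Qed.

End UpperBound.

Lemma mulIn_mod d n a b : coprime d n -> a < n -> b < n ->
  a * d = b * d %[mod n] -> a = b.
Proof.
wlog ab : a b / a <= b.
  move=> W cdn an bn E; case: (leqP a b) => [ab|ba]; first exact: W.
  by apply/esym/W => //; apply: ltnW.
move=> cdn an bn E.
have : n %| (b - a) * d by rewrite mulnBl -eqn_mod_dvd ?leq_mul2r ?ab ?orbT // E.
rewrite Gauss_dvdl 1?coprime_sym //.
by case: (posnP (b - a)) => [|ba_gt0 /(dvdn_leq ba_gt0)]; lia.
Qed.

Definition weight m (x : {ffun 'I_m -> 'I_4}) := \sum_(k < m) k * x k.

Definition residue_class m n s : {set {ffun 'I_m -> 'I_4}} :=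
  [set x in SRvert m 3 | weight x %% n == s].

Lemma weight_exchange m (x y : {ffun 'I_m -> 'I_4}) a b d :
  x \in SRvert m 3 -> y \in SRvert m 3 -> a != b ->
  (forall k, k != a -> k != b -> (x k : nat) = y k) -> (x a : nat) = y a + d ->
  weight x + b * d = weight y + a * d.
Proof.
move=> /SRvert_sum xs /SRvert_sum ys ab agree xa.
have split_ab (f : 'I_m -> nat) :
    \sum_k f k = f a + f b + \sum_(k | (k != a) && (k != b)) f k.
  by rewrite (bigD1 a) //= (bigD1 b) 1?eq_sym //= addnA.
have rest (f : 'I_m -> 'I_4 -> nat) :
    \sum_(k | (k != a) && (k != b)) f k (x k) = \sum_(k | (k != a) && (k != b)) f k (y k).
  by apply: eq_bigr => k /andP[ka kb]; congr (f k _); apply/val_inj/agree.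
have yb : (y b : nat) = x b + d.
  move: xs ys; rewrite split_ab [in X in _ -> X]split_ab.
  by rewrite (rest (fun _ (v : 'I_4) => v : nat)); lia.
rewrite /weight split_ab [in RHS]split_ab (rest (fun (k : 'I_m) (v : 'I_4) => k * v)) xa yb !mulnDr.
lia.
Qed.

Section ResidueClassIndependent.
Variables m n s : nat.
Hypothesis m_le_n : m <= n.
Hypothesis n_odd : odd n.
Hypothesis three_n : coprime 3 n \/ (3 %| n /\ s = 1).

(* When 3 divides n, the residue s = 1 excludes the vertices 3 e_a, whose weight is 3 a. *)
Lemma residue_class_exchange_lt (x y : {ffun 'I_m -> 'I_4}) a b :
  x \in residue_class m n s -> y \in residue_class m n s -> a != b ->
  (forall k, k != a -> k != b -> (x k : nat) = y k) -> y a < x a -> False.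
Proof.
move=> /setIdP[xv /eqP xs] /setIdP[yv /eqP ys] ab agree lt_ya.
have xa : (x a : nat) = y a + (x a - y a) by lia.
have := weight_exchange xv yv ab agree xa.
set d := x a - y a => /(congr1 (modn^~ n)).
rewrite -modnDml xs -[in RHS]modnDml ys => /eqP; rewrite eqn_modDl => /eqP E.
have [an bn] : a < n /\ b < n by split; apply: leq_trans m_le_n.
have coprime_d : coprime d n -> False.
  by move=> cd; move/eqP: ab; apply; apply/val_inj/(mulIn_mod cd an bn (esym E)).
have : d \in [:: 1; 2; 3] by rewrite !inE; have := ltn_ord (x a); lia.
rewrite !inE => /or3P[/eqP d1|/eqP d2|/eqP d3].
- by apply: coprime_d; rewrite d1 coprime1n.
- by apply: coprime_d; rewrite d2 coprime2n.
case: three_n => [c3|[three_dvd s1]]; first by apply: coprime_d; rewrite d3.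
have xa3 : (x a : nat) = 3 by have := ltn_ord (x a); lia.
have wx : weight x = a * 3.
  rewrite /weight (bigD1 a) //= xa3 big1 ?addn0 // => k ka.
  by rewrite (SRvert_full xv xa3 ka) muln0.
by move: xs; rewrite wx s1 => /(congr1 (modn^~ 3)); rewrite modn_dvdm ?modnMl.
Qed.

Lemma residue_class_indep : SRindependent (residue_class m n s).
Proof.
apply/andP; split; first by apply/subsetP => x /setIdP[].
apply/forall_inP => x xS; apply/forall_inP => y yS; apply/negP => /cards2P[a [b [ab D]]].
have agree k : k != a -> k != b -> (x k : nat) = y k.
  move=> ka kb; have : k \notin [set i | x i != y i] by rewrite D !inE negb_or ka kb.
  by rewrite inE negbK => /eqP ->.
have : a \in [set i | x i != y i] by rewrite D !inE eqxx.
rewrite inE -val_eqE /=; case: ltngtP => // lt_xy _.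
  by apply: (residue_class_exchange_lt yS xS ab) => // k ka kb; rewrite agree.
exact: (residue_class_exchange_lt xS yS ab).
Qed.

End ResidueClassIndependent.

Section WeightClassCount.
Variable m : nat.
Local Notation V := {ffun 'I_m -> 'I_4}.

Definition vec3 (i j c : 'I_m) : V := [ffun k => inord ((k == i) + (k == j) + (k == c))].

(* The number of ways to pick, in order, a unit at i, then at j, then at c out of the
   multiset x; summed over all (i, j, c) it is 3! for every vertex. *)
Definition picks (i j c : 'I_m) (x : V) : nat :=
  x i * (x j - (j == i)) * (x c - (c == i) - (c == j)).

Lemma vec3E i j c k : (vec3 i j c k : nat) = (k == i) + (k == j) + (k == c).
Proof. by rewrite ffunE inordK //; case: (k == i); case: (k == j); case: (k == c). Qed.

Lemma sum_vec3 (f : 'I_m -> nat) i j c :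
  \sum_k f k * vec3 i j c k = f i + f j + f c.
Proof.
under eq_bigr => k _ do rewrite vec3E !mulnDr.
by rewrite !big_split /= !sum_mul_pred1.
Qed.

Lemma vec3_vert i j c : vec3 i j c \in SRvert m 3.
Proof.
by rewrite inE (eq_bigr (fun k => 1 * vec3 i j c k)) ?sum_vec3 // => k _; rewrite mul1n.
Qed.

Lemma weight_vec3 i j c : weight (vec3 i j c) = i + j + c.
Proof. exact: sum_vec3. Qed.

Lemma picks_vec3 i j c : picks i j c (vec3 i j c) = (1 + (j == i) + (c == i)) * (1 + (c == j)).
Proof.
rewrite /picks !vec3E !eqxx (eq_sym i j) (eq_sym i c) (eq_sym j c).
by case: (j == i); case: (c == i); case: (c == j).
Qed.

Lemma picks_supp (x : V) i j c : x \in SRvert m 3 ->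
  picks i j c x = (x == vec3 i j c) * picks i j c (vec3 i j c).
Proof.
move=> xv; case: (eqVneq x (vec3 i j c)) => [->|x_ne]; first by rewrite mul1n.
rewrite mul0n; apply/eqP; apply: contraR x_ne; rewrite /picks -!lt0n !muln_gt0.
move=> /andP[/andP[xi xj] xc].
have le_x k : (vec3 i j c k : nat) <= x k.
  rewrite vec3E; case: (eqVneq k c) => [->|kc].
    by move: xc; case: (c == i); case: (c == j); lia.
  case: (eqVneq k j) => [->|kj].
    by move: xj; case: (j == i); lia.
  by case: (eqVneq k i) => [->|]; lia.
have := eq_sum_leq le_x; rewrite (SRvert_sum xv) (SRvert_sum (vec3_vert i j c)).
by move=> /(_ erefl) E; apply/eqP/ffunP => k; apply/val_inj; rewrite /= E.
Qed.

Lemma sum_picks (x : V) : x \in SRvert m 3 -> \sum_i \sum_j \sum_c picks i j c x = 6.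
Proof.
move=> /SRvert_sum x3.
have sum_sub_unit (l : 'I_m) : 0 < x l -> \sum_k (x k - (k == l)) = 2.
  move=> xl; rewrite sumnB ?x3 ?sum_pred1 // => k.
  by case: (eqVneq k l) => [->|].
have inner i j : \sum_c picks i j c x = x i * (x j - (j == i)).
  rewrite /picks -big_distrr /=.
  case: (posnP (x i * (x j - (j == i)))) => [->|]; first by rewrite mul0n.
  rewrite muln_gt0 => /andP[xi xj]; rewrite -[RHS]muln1; congr (_ * _).
  under eq_bigr do rewrite -subnDA.
  rewrite sumnB ?x3 ?big_split /= ?sum_pred1 // => k.
  case: (eqVneq k i) => [->|ki].
    by case: (eqVneq i j) => [eij|_] /=; last lia; move: xj; rewrite eij eqxx; lia.
  by case: (eqVneq k j) => [ekj|] //=; move: xj; rewrite -ekj (negbTE ki); lia.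
under eq_bigr => i _ do under eq_bigr => j _ do rewrite inner.
under eq_bigr => i _ do rewrite -big_distrr /=.
rewrite (eq_bigr (fun i => x i * 2)); first by rewrite -big_distrl /= x3.
move=> i _; case: (posnP (x i : nat)) => [->|xi]; first by rewrite !mul0n.
by rewrite sum_sub_unit.
Qed.

Variable P : pred nat.

Lemma card_weight_class :
  6 * #|[set x in SRvert m 3 | P (weight x)]| =
  \sum_(i < m) \sum_(j < m) \sum_(c < m)
    P (i + j + c) * ((1 + (j == i) + (c == i)) * (1 + (c == j))).
Proof.
rewrite -sum1_card big_distrr /=.
rewrite (eq_bigr (fun x => \sum_i \sum_j \sum_c picks i j c x)); last first.
  by move=> x /setIdP[xv _]; rewrite sum_picks // muln1.
rewrite exchange_big; apply: eq_bigr => i _.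
rewrite exchange_big; apply: eq_bigr => j _.
rewrite exchange_big; apply: eq_bigr => c _.
rewrite -picks_vec3 -weight_vec3.
rewrite (eq_bigr (fun x => (x == vec3 i j c) * picks i j c (vec3 i j c))); last first.
  by move=> x /setIdP[xv _]; apply: picks_supp.
rewrite big_mkcond /= -(sum_mul_pred1 (vec3 i j c) (fun x => P (weight x) * picks i j c (vec3 i j c))).
apply: eq_bigr => x _; rewrite in_set.
case: eqVneq => [->|_]; last by rewrite mul0n muln0 if_same.
by rewrite vec3_vert muln1 mul1n /= mulnbl.
Qed.

End WeightClassCount.

Section TripleSums.
Variable m : nat.
Implicit Type F : nat -> nat.

Definition triple_sum F := \sum_(i < m) \sum_(j < m) \sum_(c < m) F (i + j + c).
Definition double_sum F := \sum_(i < m) \sum_(j < m) F (i + i + j).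
Definition diag_sum F := \sum_(i < m) F (i + i + i).

Lemma sum3D (f g : 'I_m -> 'I_m -> 'I_m -> nat) :
  \sum_i \sum_j \sum_c (f i j c + g i j c) =
  \sum_i \sum_j \sum_c f i j c + \sum_i \sum_j \sum_c g i j c.
Proof.
rewrite -big_split; apply: eq_bigr => i _.
by rewrite -big_split; apply: eq_bigr => j _; apply: big_split.
Qed.

Lemma sum_multiplicity_weight F :
  \sum_(i < m) \sum_(j < m) \sum_(c < m)
    F (i + j + c) * ((1 + (j == i) + (c == i)) * (1 + (c == j))) =
  triple_sum F + 3 * double_sum F + 2 * diag_sum F.
Proof.
pose f (i j c : 'I_m) := F (i + j + c).
have weightE i j c : f i j c * ((1 + (j == i) + (c == i)) * (1 + (c == j))) =
    f i j c + f i j c * (j == i) + f i j c * (c == i) + f i j c * (c == j)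
    + f i j c * (j == i) * (c == i) + f i j c * (j == i) * (c == i).
  move: (f i j c) => p; case: (eqVneq j i) => [->|ji]; first by case: (c == i); lia.
  case: (eqVneq c i) => [->|_]; last by case: (c == j); lia.
  by rewrite eq_sym (negbTE ji); lia.
have diag_ji : \sum_i \sum_j \sum_c f i j c * (j == i) = double_sum F.
  apply: eq_bigr => i _; rewrite exchange_big; apply: eq_bigr => c _.
  exact: (sum_mul_pred1 i (fun j => f i j c)).
have diag_ci : \sum_i \sum_j \sum_c f i j c * (c == i) = double_sum F.
  apply: eq_bigr => i _; apply: eq_bigr => j _.
  by rewrite (sum_mul_pred1 i (fun c => f i j c)) /f addnAC.
have diag_cj : \sum_i \sum_j \sum_c f i j c * (c == j) = double_sum F.
  rewrite exchange_big; apply: eq_bigr => j _; apply: eq_bigr => i _.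
  by rewrite (sum_mul_pred1 j (fun c => f i j c)) /f -addnA addnC.
have diag_all : \sum_i \sum_j \sum_c f i j c * (j == i) * (c == i) = diag_sum F.
  apply: eq_bigr => i _; rewrite exchange_big.
  rewrite (eq_bigr (fun c => f i i c * (c == i))) ?(sum_mul_pred1 i (f i i)) // => c _.
  by rewrite -big_distrl /= (sum_mul_pred1 i (fun j => f i j c)).
rewrite (eq_bigr _ (fun i _ => eq_bigr _ (fun j _ => eq_bigr _ (fun c _ => weightE i j c)))).
rewrite !sum3D diag_ji diag_ci diag_cj diag_all.
by rewrite -/(triple_sum F); lia.
Qed.

End TripleSums.

Lemma sum_ord_const m (A : 'I_m -> nat) K : (forall i, A i = K) -> \sum_i A i = m * K.
Proof. by move=> AK; rewrite (eq_bigr _ (fun i _ => AK i)) sum_nat_const card_ord. Qed.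

Lemma sum_add_const m (A B : 'I_m -> nat) K : (forall i, A i + B i = K) ->
  \sum_i A i + \sum_i B i = m * K.
Proof. by move=> AB; rewrite -big_split; apply: sum_ord_const. Qed.

Definition residue_hit n s k : nat := k %% n == s.

Lemma diag_sum_residue_dvd3 n m : 3 %| n -> diag_sum m (residue_hit n 1) = 0.
Proof.
move=> three_n; apply: big1 => i _; rewrite /residue_hit.
have -> : i + i + i = i * 3 by lia.
apply/eqP; rewrite eqb0; apply/eqP => /(congr1 (modn^~ 3)).
by rewrite modn_dvdm // modnMl.
Qed.

Section ResidueSums.
Variables n s : nat.
Hypothesis s_lt_n : s < n.
Local Notation hit := (residue_hit n s).

Lemma sum_residue_hit_affine (f : nat -> nat) a k : coprime a n ->
  (forall i, f i = a * i + k) -> \sum_(i < n) hit (f i) = 1.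
Proof.
move=> a_n fE; have n_gt0 : 0 < n by case: n s_lt_n.
pose g (i : 'I_n) := Ordinal (ltn_pmod (f i) n_gt0).
have g_inj : injective g.
  move=> i1 i2 /(congr1 val) /=; rewrite !fE => /eqP; rewrite eqn_modDr => /eqP E.
  apply/val_inj/(mulIn_mod a_n (ltn_ord i1) (ltn_ord i2)).
  by rewrite mulnC E mulnC.
rewrite -(sum_pred1 (Ordinal s_lt_n)) [RHS](reindex_inj g_inj) /=.
by apply: eq_bigr => i _; rewrite /residue_hit -val_eqE.
Qed.

Lemma residue_sums_eq :
  [/\ triple_sum n hit = n * n, double_sum n hit = n
    & coprime 3 n -> diag_sum n hit = 1].
Proof.
have one_c (k : nat) : \sum_(c < n) hit (k + c) = 1.
  by apply: (@sum_residue_hit_affine (addn k) 1 k (coprime1n n)) => c; lia.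
split=> [||three_n].
- apply: sum_ord_const => i; rewrite -[RHS]muln1.
  by apply: sum_ord_const => j; apply: one_c.
- by rewrite -[RHS]muln1; apply: sum_ord_const => i; apply: one_c.
- by apply: (@sum_residue_hit_affine (fun i => i + i + i) 3 0 three_n) => i; lia.
Qed.

End ResidueSums.

Section ResidueSumsSucc.
Variables m s : nat.
Hypothesis s_lt : s < m.+1.
Hypothesis m_even : ~~ odd m.
Local Notation hit := (residue_hit m.+1 s).
Hypothesis hit_3m : hit (m + m + m) = 0.

Lemma sum_residue_hit_last (f : nat -> nat) a k : coprime a m.+1 ->
  (forall i, f i = a * i + k) -> \sum_(i < m) hit (f i) + hit (f m) = 1.
Proof.
by move=> a_m fE; rewrite -(sum_residue_hit_affine s_lt a_m fE) big_ord_recr.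
Qed.

Lemma residue_sums_succ :
  [/\ triple_sum m hit + m = m * m + 1, double_sum m hit + 1 = m
    & coprime 3 m.+1 -> diag_sum m hit = 1].
Proof.
have two_m : coprime 2 m.+1 by rewrite coprime2n.
have last_c (k : nat) : \sum_(c < m) hit (k + c) + hit (k + m) = 1.
  by apply: (@sum_residue_hit_last (addn k) 1 k (coprime1n _)) => c; lia.
have pairs_m :
    \sum_(i < m) \sum_(j < m) hit (i + j + m) + \sum_(i < m) hit (i + m + m) = m * 1.
  apply: sum_add_const => i.
  by apply: (@sum_residue_hit_last (fun j => i + j + m) 1 (i + m) (coprime1n _)) => j; lia.
have single_mm : \sum_(i < m) hit (i + m + m) + hit (m + m + m) = 1.
  by apply: (@sum_residue_hit_last (fun i => i + m + m) 1 (m + m) (coprime1n _)) => i; lia.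
have double_m : \sum_(i < m) hit (i + i + m) + hit (m + m + m) = 1.
  by apply: (@sum_residue_hit_last (fun i => i + i + m) 2 m two_m) => i; lia.
split=> [||three_m].
- have : triple_sum m hit + \sum_(i < m) \sum_(j < m) hit (i + j + m) = m * m.
    apply: sum_add_const => i; rewrite -big_split /= -[RHS]muln1; apply: sum_ord_const => j.
    exact: last_c.
  by lia.
- have : double_sum m hit + \sum_(i < m) hit (i + i + m) = m * 1.
    by apply: sum_add_const => i; apply: last_c.
  by lia.
- have := @sum_residue_hit_last (fun i => i + i + i) 3 0 three_m.
  by rewrite /diag_sum hit_3m addn0 => ->// i; lia.
Qed.

End ResidueSumsSucc.

Lemma card_residue_class m n s :
  6 * #|residue_class m n s| =
  triple_sum m (residue_hit n s) + 3 * double_sum m (residue_hit n s)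
  + 2 * diag_sum m (residue_hit n s).
Proof. by rewrite -sum_multiplicity_weight (card_weight_class m (fun w => w %% n == s)). Qed.

Lemma card_residue_class_odd m : odd m ->
  6 * #|residue_class m m (3 %| m)| = m * (m + 3) + 2 * ~~ (3 %| m).
Proof.
move=> m_odd; have s_lt_m : (3 %| m) < m by lia.
have [triple double diag] := residue_sums_eq s_lt_m.
rewrite card_residue_class triple double.
case: (boolP (3 %| m)) s_lt_m diag => three_m s_lt_m diag.
  by rewrite (diag_sum_residue_dvd3 m three_m); nia.
by rewrite diag ?prime_coprime //; nia.
Qed.

Lemma residue_hit_triple_last m : 0 < m -> ~~ odd m ->
  residue_hit m.+1 (3 %| m.+1) (m + m + m) = 0.
Proof.
move=> m_gt0 m_even; have m_ge2 : 2 <= m by case: m m_gt0 m_even => [|[]].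
rewrite /residue_hit (_ : m + m + m = 2 * m.+1 + (m - 2)); last by lia.
rewrite modnMDl modn_small; last by lia.
by apply/eqP; rewrite eqb0; apply/eqP; lia.
Qed.

Lemma card_residue_class_even m : 0 < m -> ~~ odd m ->
  6 * #|residue_class m m.+1 (3 %| m.+1)| + 2 = m * (m + 2) + 2 * ~~ (3 %| m.+1).
Proof.
move=> m_gt0 m_even; have s_lt : (3 %| m.+1) < m.+1 by lia.
have [triple double diag] :=
  residue_sums_succ s_lt m_even (residue_hit_triple_last m_gt0 m_even).
rewrite card_residue_class.
case: (boolP (3 %| m.+1)) s_lt triple double diag => three_m s_lt triple double diag.
  by rewrite (diag_sum_residue_dvd3 m three_m); nia.
by rewrite diag ?prime_coprime //; nia.
Qed.

Lemma SRalpha_eq_card m n (T : {set {ffun 'I_m -> 'I_n.+1}}) : SRindependent T ->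
  (forall S : {set {ffun 'I_m -> 'I_n.+1}}, SRindependent S -> #|S| <= #|T|) ->
  SRalpha m n = #|T|.
Proof.
move=> T_indep T_max; apply/eqP; rewrite eqn_leq.
rewrite (leq_bigmax_cond (P := @SRindependent m n) (F := fun S => #|S|) T T_indep) andbT.
exact/bigmax_leqP.
Qed.

Lemma SRalpha_odd m : odd m -> 6 * SRalpha m 3 = m * (m + 3) + 2 * ~~ (3 %| m).
Proof.
move=> m_odd; have T_indep : SRindependent (residue_class m m (3 %| m)).
  by apply: residue_class_indep => //; case: (boolP (3 %| m)); [right | left; rewrite prime_coprime].
rewrite (SRalpha_eq_card T_indep) ?card_residue_class_odd // => S S_indep.
have := indep_card_bound S_indep; have := card_residue_class_odd m_odd; rewrite m_odd.
by set M := m * _; set T := residue_class _ _ _; lia.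
Qed.

Lemma SRalpha_even m : 0 < m -> ~~ odd m ->
  6 * SRalpha m 3 + 2 = m * (m + 2) + 2 * ~~ (3 %| m.+1).
Proof.
move=> m_gt0 m_even; have T_indep : SRindependent (residue_class m m.+1 (3 %| m.+1)).
  by apply: residue_class_indep => //; case: (boolP (3 %| m.+1)); [right | left; rewrite prime_coprime].
rewrite (SRalpha_eq_card T_indep) ?card_residue_class_even // => S S_indep.
have := indep_card_bound S_indep; have := card_residue_class_even m_gt0 m_even.
by rewrite (negbTE m_even) addn0; set M := m * _; set T := residue_class _ _ _; lia.
Qed.

Theorem proposition13 (m : nat) : 1 <= m ->
  [/\ (m %% 6 == 1) || (m %% 6 == 5) -> 6 * SRalpha m 3 = (m + 1) * (m + 2),
      m %% 6 == 3 -> 6 * SRalpha m 3 = m * (m + 3),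
      (m %% 6 == 0) || (m %% 6 == 4) -> 6 * SRalpha m 3 = m * (m + 2)
    & m %% 6 == 2 -> 6 * SRalpha m 3 + 2 = m ^ 2 + 2 * m].
Proof.
move=> m_gt0; rewrite expnS expn1 !mulnDl !mulnDr.
have [m_odd|m_even] := boolP (odd m).
  by have := SRalpha_odd m_odd; rewrite !mulnDr; split=> h; lia.
by have := SRalpha_even m_gt0 m_even; rewrite !mulnDr; split=> h; lia.
Qed.
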